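(* Let $\Omega\subseteq\mathbb{R}^n$ ($n\ge 1$) be a bounded measurable set, $Y$ a Hilbert space, $S:L^2(\Omega)\to Y$ linear and continuous, $u_a,u_b\in L^\infty(\Omega)$ with $U_{\text{ad}}:=\{u\in L^2(\Omega):\ u_a\le u\le u_b \text{ a.e.}\}\neq\emptyset$, and let $(\alpha_k)_{k\ge1}$ be a uniformly bounded sequence of positive reals. Let $z,z^\delta\in Y$ with $\|z-z^\delta\|_Y\le\delta$, $\delta\ge 0$. Let $(u_k)_k$ and $(u_k^\delta)_k$ be the sequences generated by the Bregman iteration (described in the context) with data $z$ and $z^\delta$, respectively. Then for every $k\ge1$, $$\sum_{i=1}^k \frac{1}{\alpha_i}\|u_i^\delta-u_i\|_{L^2(\Omega)}^2\le \delta^2\sum_{i=1}^k\Big(\frac{1}{\alpha_i^2}+\gamma_{i-1}^2\Big),$$ where $\gamma_k:=\sum_{j=1}^k \frac{1}{\alpha_j}$ and $\gamma_0:=0$.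
   Context: Define $J:L^2(\Omega)\to\mathbb{R}\cup\{+\infty\}$ by $J(u)=\frac12\|u\|^2+I_{U_{\text{ad}}}(u)$, where $I_{U_{\text{ad}}}$ is the indicator function ($0$ on $U_{\text{ad}}$, $+\infty$ otherwise), and for $\lambda\in\partial J(v)$ the Bregman distance $D^\lambda(u,v):=J(u)-J(v)-(u-v,\lambda)_{L^2}$. The Bregman iteration with data $\zeta\in Y$ is: set $u_0=P_{U_{\text{ad}}}(0)$ (pointwise projection onto $[u_a,u_b]$), $\lambda_0=0\in\partial J(u_0)$; for $k=1,2,\dots$ let $u_k$ be the (unique) minimizer of $u\mapsto\frac12\|Su-\zeta\|_Y^2+\alpha_k D^{\lambda_{k-1}}(u,u_{k-1})$ over $L^2(\Omega)$, then set $\mu_k:=\sum_{i=1}^k\frac{1}{\alpha_i}(\zeta-Su_i)$ and $\lambda_k:=S^\ast\mu_k$. The sequence $(u_k^\delta)_k$ is obtained with $\zeta=z^\delta$ (with corresponding $\lambda_k^\delta$), and $(u_k)_k$ with $\zeta=z$. *)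

From HB Require Import structures.
From mathcomp Require Import all_boot all_order all_algebra.
From mathcomp Require Import all_classical all_reals all_analysis.
Set Implicit Arguments. Unset Strict Implicit. Unset Printing Implicit Defensive.
Import Order.TTheory GRing.Theory Num.Theory.
Import numFieldNormedType.Exports.
Local Open Scope classical_set_scope.
Local Open Scope ring_scope.

Section BregmanDefs.
Context d (T : measurableType d) (R : realType).
Variable mu : {measure set T -> \bar R}.

Definition L2 := LfunType mu (lee1n 2).

Definition L2norm (u : T -> R) : R := fine ('N[mu]_2%:E[EFin \o u])%E.
Definition L2ip (u v : T -> R) : R := \int[mu]_x (u x * v x).

Definition Uad (ua ub : T -> R) (u : T -> R) : Prop :=
  {ae mu, forall x, ua x <= u x <= ub x}.

Definition Jfun (ua ub : T -> R) (u : L2) : \bar R :=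
  if `[< Uad ua ub u >] then ((1/2) * L2norm u ^+ 2)%:E else +oo%E.

Definition bregman_dist (ua ub : T -> R) (lam u v : L2) : \bar R :=
  (Jfun ua ub u - Jfun ua ub v - (L2ip (u - v : L2) lam)%:E)%E.

(** real inner product compatible with the norm: Y is then a Hilbert space
    when Y is a complete normed module *)
Definition is_inner_product (Y : normedModType R) (ip : Y -> Y -> R) : Prop :=
  [/\ forall x y, ip x y = ip y x,
      forall a x y z, ip (a *: x + y) z = a * ip x z + ip y z
    & forall x, ip x x = `|x| ^+ 2].

Variables (Y : normedModType R) (ip : Y -> Y -> R).

Definition bregman_mu (S : L2 -> Y) (alpha : nat -> R) (zeta : Y)
    (u : nat -> L2) (k : nat) : Y :=
  \sum_(1 <= i < k.+1) (alpha i)^-1 *: (zeta - S (u i)).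

(** u is the Bregman iteration with data zeta; lambda_k = S^* mu_k,
    where Sadj is the adjoint of S *)
Definition bregman_iteration (ua ub : T -> R) (S : L2 -> Y) (Sadj : Y -> L2)
    (alpha : nat -> R) (zeta : Y) (u : nat -> L2) : Prop :=
  (* u_0 = P_{U_ad}(0), pointwise projection of 0 onto [ua, ub] *)
  {ae mu, forall x, u 0%N x = Num.max (ua x) (Num.min 0 (ub x))} /\
  forall k : nat, (1 <= k)%N -> forall w : L2,
    (((1/2) * `|S (u k) - zeta| ^+ 2)%:E
       + (alpha k)%:E * bregman_dist ua ub (Sadj (bregman_mu S alpha zeta u k.-1))
                          (u k) (u k.-1)
     <= ((1/2) * `|S w - zeta| ^+ 2)%:E
       + (alpha k)%:E * bregman_dist ua ub (Sadj (bregman_mu S alpha zeta u k.-1))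
                          w (u k.-1))%E.

End BregmanDefs.

Definition gamma_seq (R : realType) (alpha : nat -> R) (k : nat) : R :=
  \sum_(1 <= j < k.+1) (alpha j)^-1.

Arguments Jfun {d T R} mu ua ub u.
Arguments bregman_dist {d T R} mu ua ub lam u v.
Arguments bregman_mu {d T R} mu {Y} S alpha zeta u k.
Arguments bregman_iteration {d T R} mu {Y} ua ub S Sadj alpha zeta u.

From HB Require Import structures.
From mathcomp Require Import all_boot all_order all_algebra.
From mathcomp Require Import all_classical all_reals all_analysis.
From mathcomp Require Import measurable_realfun.
From mathcomp Require Import ring lra.
Set Implicit Arguments. Unset Strict Implicit. Unset Printing Implicit Defensive.
Import Order.TTheory GRing.Theory Num.Theory.
Import numFieldNormedType.Exports.
Local Open Scope classical_set_scope.
Local Open Scope ring_scope.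

(* Since J is 1/2 ||.||^2 on U_ad, the step k of the Bregman iteration is
   optimal along every segment [u_k, w] of U_ad; expanding in the segment
   parameter t and letting t -> 0 yields the strongly monotone variational
   inequality
     1/2 ||u_k||^2 + (S w - S u_k, mu_k) + 1/2 ||w - u_k||^2 <= 1/2 ||w||^2.
   Testing the iterations for z and z^delta against each other gives
     ||u_k^delta - u_k||^2 <= (S u_k^delta - S u_k, mu_k^delta - mu_k),
   and mu_k^delta - mu_k = gamma_k (z^delta - z) - W_k with
   W_k = sum_{j <= k} 1/alpha_j (S u_j^delta - S u_j).  Multiplying by
   1/alpha_k and completing the square, the ||W_k||^2 terms telescope:
     sum_{i <= k} 1/alpha_i ||u_i^delta - u_i||^2 + 1/2 ||W_k||^2
       <= delta^2 / 2 sum_{i <= k} gamma_i^2,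
   and gamma_i^2 <= 2 (1/alpha_i^2 + gamma_{i-1}^2). *)

Section L2_facts.
Context {d} {T : measurableType d} {R : realType} {mu : {measure set T -> \bar R}}.

Lemma L2norm_ge0 (f : L2 mu) : 0 <= L2norm mu f.
Proof. by rewrite -lee_fin /L2norm finite_norm_fine Lnorm_ge0. Qed.

Lemma L2norm_sqrE (f : L2 mu) :
  (L2norm mu f ^+ 2)%:E = (\int[mu]_x ((f x) ^+ 2)%:E)%E.
Proof.
rewrite -powR_mulrn ?L2norm_ge0 // -poweR_EFin /L2norm finite_norm_fine.
rewrite poweR_Lnorm ?pnatr_eq0 //; apply: eq_integral => x _ /=.
by rewrite powR_mulrn // real_normK // num_real.
Qed.

Lemma measurable_sqr (f : L2 mu) :
  measurable_fun [set: T] (fun x : T => ((f x) ^+ 2)%:E).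
Proof. by apply/measurable_EFinP; exact: measurable_funX. Qed.

Lemma L2norm_distC (a b : L2 mu) : L2norm mu (a - b) = L2norm mu (b - a).
Proof.
apply/eqP; rewrite -(@eqrXn2 _ 2) ?L2norm_ge0 //; apply/eqP/EFin_inj.
rewrite !L2norm_sqrE; apply: eq_integral => x _.
have -> : (a - b) x = - (b x - a x) by rewrite opprB.
by rewrite sqrrN.
Qed.

(* Stated without an L^2 inner product: only integrals of nonnegative
   functions occur. *)
Lemma L2norm_sqr_convex_comb (a b : L2 mu) t : 0 <= t <= 1 ->
  L2norm mu ((1 - t) *: a + t *: b) ^+ 2 + t * (1 - t) * L2norm mu (b - a) ^+ 2
  = (1 - t) * L2norm mu a ^+ 2 + t * L2norm mu b ^+ 2.
Proof.
move=> /andP[t0 t1]; have t10 : 0 <= 1 - t by rewrite subr_ge0.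
have sqrZE (c : R) (f : L2 mu) : 0 <= c ->
    (c * L2norm mu f ^+ 2)%:E = (\int[mu]_x (c * f x ^+ 2)%:E)%E.
  move=> c0; rewrite EFinM L2norm_sqrE -ge0_integralZl_EFin //.
  - by move=> x _; rewrite lee_fin sqr_ge0.
  - exact: measurable_sqr.
have sqrZ_ge0 (c : R) (f : L2 mu) x :
    0 <= c -> [set: T] x -> (0 <= (c * f x ^+ 2)%:E)%E.
  by move=> c0 _; rewrite lee_fin mulr_ge0 ?sqr_ge0.
have measurable_sqrZ (c : R) (f : L2 mu) :
    measurable_fun [set: T] (fun x : T => (c * f x ^+ 2)%:E).
  by apply/measurable_EFinP; apply: measurable_funM => //; exact: measurable_funX.
apply: EFin_inj; rewrite EFinD [RHS]EFinD.
rewrite -[L2norm mu ((1 - t) *: a + t *: b : L2 mu) ^+ 2]mul1r.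
rewrite !sqrZE ?mulr_ge0 // -!ge0_integralD //; try exact: measurable_sqrZ;
  try by move=> x; apply: sqrZ_ge0; rewrite ?mulr_ge0.
apply: eq_integral => x _; congr EFin.
have -> : ((1 - t) *: a + t *: b) x = (1 - t) * a x + t * b x by [].
have -> : (b - a) x = b x - a x by [].
ring.
Qed.

Lemma Uad_convex (ua ub : T -> R) (a b : L2 mu) t : 0 <= t <= 1 ->
  Uad mu ua ub a -> Uad mu ua ub b -> Uad mu ua ub ((1 - t) *: a + t *: b).
Proof.
move=> /andP[t0 t1] ha hb; apply: filterS2 ha hb => x /andP[a1 a2] /andP[b1 b2].
have -> : ((1 - t) *: a + t *: b) x = (1 - t) * a x + t * b x by [].
apply/andP; split; nra.
Qed.

Lemma Uad_proj0 (ua ub : T -> R) (v u0 : L2 mu) : Uad mu ua ub v ->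
  {ae mu, forall x, u0 x = Num.max (ua x) (Num.min 0 (ub x))} ->
  Uad mu ua ub u0.
Proof.
move=> hv h; apply: filterS2 hv h => x /andP[a1 a2] ->.
rewrite le_max lexx ge_max ge_min lexx orbT andbT.
exact: le_trans a2.
Qed.

End L2_facts.

Section inner_product.
Context {R : realType} {Y : normedModType R} {ip : Y -> Y -> R}.
Hypothesis ip_inner : is_inner_product ip.

Lemma ip_sym x y : ip x y = ip y x. Proof. by case: ip_inner. Qed.

Lemma ip_normE x : ip x x = `|x| ^+ 2. Proof. by case: ip_inner. Qed.

Lemma ipDl x y z : ip (x + y) z = ip x z + ip y z.
Proof. by case: ip_inner => _ lin _; rewrite -[x]scale1r lin mul1r scale1r. Qed.

Lemma ipZl a x z : ip (a *: x) z = a * ip x z.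
Proof.
case: ip_inner => _ lin _.
have ip0l : ip 0 z = 0 by have := lin 1 0 0 z; rewrite scaler0 addr0 mul1r; lra.
by rewrite -[a *: x]addr0 lin ip0l addr0.
Qed.

Lemma ipNl x z : ip (- x) z = - ip x z.
Proof. by rewrite -scaleN1r ipZl mulN1r. Qed.

Lemma ipBl x y z : ip (x - y) z = ip x z - ip y z.
Proof. by rewrite ipDl ipNl. Qed.

Lemma ipDr x y z : ip z (x + y) = ip z x + ip z y.
Proof. by rewrite !(ip_sym z) ipDl. Qed.

Lemma ipZr a x z : ip z (a *: x) = a * ip z x.
Proof. by rewrite !(ip_sym z) ipZl. Qed.

Lemma ipNr x z : ip z (- x) = - ip z x.
Proof. by rewrite !(ip_sym z) ipNl. Qed.

Lemma ipBr x y z : ip z (x - y) = ip z x - ip z y.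
Proof. by rewrite !(ip_sym z) ipBl. Qed.

Lemma ip_sqrD x y : ip (x + y) (x + y) = ip x x + 2 * ip x y + ip y y.
Proof. rewrite ipDl !ipDr (ip_sym y x); ring. Qed.

Lemma ip_young x y : 2 * ip x y <= ip x x + ip y y.
Proof.
have := ip_sqrD x (- y); rewrite ip_normE !ipNr ipNl opprK => E.
by have := sqr_ge0 `|x - y|; rewrite E; lra.
Qed.

End inner_product.

Lemma lin_coef_ge0 (R : realFieldType) (A B : R) : 0 <= B ->
  (forall t, 0 < t <= 1 -> 0 <= t * A + t ^+ 2 * B) -> 0 <= A.
Proof.
move=> B0 h; rewrite leNgt; apply/negP => A0.
have BA : 0 < B - A by lra.
pose t := - A / (B - A).
have t0 : 0 < t by rewrite divr_gt0 // oppr_gt0.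
have t1 : t <= 1 by rewrite ler_pdivrMr // mul1r; lra.
have := h t; rewrite t0 t1 => /(_ isT).
have -> : t * A + t ^+ 2 * B = t * (- A ^+ 2 / (B - A)) by rewrite /t; field; lra.
rewrite pmulr_rge0 // pmulr_lge0 ?invr_gt0 // oppr_ge0 => hA.
have : 0 < A ^+ 2 by rewrite exprn_even_gt0 //= lt_eqF.
lra.
Qed.

Definition weighted_sum {R : realType} {Y : lmodType R} (alpha : nat -> R)
    (v : nat -> Y) (n : nat) : Y :=
  \sum_(1 <= j < n.+1) (alpha j)^-1 *: v j.

Lemma gamma_seqS (R : realType) (alpha : nat -> R) n :
  gamma_seq alpha n.+1 = gamma_seq alpha n + (alpha n.+1)^-1.
Proof. by rewrite /gamma_seq big_nat_recr. Qed.

Lemma bregman_muS d (T : measurableType d) (R : realType)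
    (mu : {measure set T -> \bar R}) (Y : normedModType R) (S : L2 mu -> Y)
    (alpha : nat -> R) (zeta : Y) (u : nat -> L2 mu) n :
  bregman_mu mu S alpha zeta u n.+1
  = bregman_mu mu S alpha zeta u n + (alpha n.+1)^-1 *: (zeta - S (u n.+1)).
Proof. by rewrite /bregman_mu big_nat_recr. Qed.

Lemma bregman_mu_diff d (T : measurableType d) (R : realType)
    (mu : {measure set T -> \bar R}) (Y : normedModType R) (S : L2 mu -> Y)
    (alpha : nat -> R) (z zd : Y) (u ud : nat -> L2 mu) n :
  bregman_mu mu S alpha zd ud n - bregman_mu mu S alpha z u n
  = gamma_seq alpha n *: (zd - z)
    - weighted_sum alpha (fun i => S (ud i) - S (u i)) n.
Proof.
rewrite /bregman_mu /gamma_seq /weighted_sum -sumrB scaler_suml -sumrB.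
apply: eq_bigr => j _; rewrite -!scalerBr; congr (_ *: _).
by rewrite !opprB addrACA [in RHS]addrACA [- z + _]addrC.
Qed.

Section bregman_step.
Context {d} {T : measurableType d} {R : realType} {mu : {measure set T -> \bar R}}.
Context {Y : normedModType R} {ip : Y -> Y -> R} {S : {linear L2 mu -> Y}}
  {Sadj : Y -> L2 mu} {ua ub : T -> R} {alpha : nat -> R} {zeta : Y}
  {u : nat -> L2 mu}.
Hypotheses (ip_inner : is_inner_product ip)
  (Sadj_adj : forall u y, ip (S u) y = L2ip mu u (Sadj y))
  (alpha_pos : forall k, (1 <= k)%N -> 0 < alpha k)
  (Uad_ne : exists v : L2 mu, Uad mu ua ub v)
  (hu : bregman_iteration mu ua ub S Sadj alpha zeta u).

Lemma Jfun_Uad (x : L2 mu) : Uad mu ua ub x ->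
  Jfun mu ua ub x = ((1/2) * L2norm mu x ^+ 2)%:E.
Proof. by move=> h; rewrite /Jfun asboolT. Qed.

Lemma bregman_dist_Uad (lam x y : L2 mu) : Uad mu ua ub x -> Uad mu ua ub y ->
  bregman_dist mu ua ub lam x y =
  ((1/2) * L2norm mu x ^+ 2 - (1/2) * L2norm mu y ^+ 2 - L2ip mu (x - y) lam)%:E.
Proof. by move=> hx hy; rewrite /bregman_dist !Jfun_Uad // !EFinB. Qed.

(* Outside U_ad the objective of step k is +oo, while at w = u_{k-1} it is
   finite. *)
Lemma bregman_iterate_Uad k : Uad mu ua ub (u k).
Proof.
elim: k => [|k IH]; first by case: Uad_ne => v hv; exact: Uad_proj0 hv hu.1.
apply/asboolP; apply/negP => /negP/asboolPn hn.
have := hu.2 k.+1 isT (u k).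
rewrite /= [in X in (_ <= X)%E]bregman_dist_Uad // /bregman_dist /Jfun.
rewrite (asboolF hn) (asboolT IH) !addye // mulry gtr0_sg ?alpha_pos // mul1e.
by rewrite addey // -EFinM -EFinD leye_eq.
Qed.

Lemma bregman_step_optimal n (w : L2 mu) : Uad mu ua ub w ->
  `|S (u n.+1) - zeta| ^+ 2 / 2 + alpha n.+1 * (L2norm mu (u n.+1) ^+ 2 / 2
      - ip (S (u n.+1 - u n)) (bregman_mu mu S alpha zeta u n))
  <= `|S w - zeta| ^+ 2 / 2 + alpha n.+1 * (L2norm mu w ^+ 2 / 2
      - ip (S (w - u n)) (bregman_mu mu S alpha zeta u n)).
Proof.
move=> hw; have hk := bregman_iterate_Uad n.+1; have hp := bregman_iterate_Uad n.
have := hu.2 n.+1 isT w.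
rewrite /= !bregman_dist_Uad // -!EFinM -!EFinD lee_fin.
rewrite -!Sadj_adj; nra.
Qed.

Lemma bregman_step_first_order n (w : L2 mu) : Uad mu ua ub w ->
  0 <= ip (S (u n.+1) - zeta) (S w - S (u n.+1))
       + alpha n.+1 * (L2norm mu w ^+ 2 / 2 - L2norm mu (u n.+1) ^+ 2 / 2
                       - L2norm mu (w - u n.+1) ^+ 2 / 2
                       - ip (S w - S (u n.+1)) (bregman_mu mu S alpha zeta u n)).
Proof.
move=> hw; set uk := u n.+1; set m := bregman_mu _ _ _ _ _ n.
set p := S uk - zeta; set q := S w - S uk.
set Qk := L2norm mu uk ^+ 2; set Qw := L2norm mu w ^+ 2.
set Qd := L2norm mu (w - uk) ^+ 2.
have a0 : 0 < alpha n.+1 by exact: alpha_pos.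
(* At (1 - t) u_{n+1} + t w the objective of step n.+1 exceeds its minimum
   by exactly t * A + t^2 * B, where 0 <= A is the claim. *)
apply: (@lin_coef_ge0 _ _ (ip q q / 2 + alpha n.+1 * Qd / 2)).
  have Qd0 : 0 <= Qd by exact: sqr_ge0.
  by rewrite (ip_normE ip_inner) addr_ge0 ?divr_ge0 ?sqr_ge0 ?(mulr_ge0 (ltW a0)).
move=> t /andP[t0 t1]; have ht : 0 <= t <= 1 by rewrite ltW.
set wt := (1 - t) *: uk + t *: w.
have := bregman_step_optimal n (Uad_convex ht (bregman_iterate_Uad n.+1) hw).
rewrite -/uk -/wt -/m.
have Swt : S wt = S uk + t *: q.
  by rewrite /wt linearD !linearZ_LR /q scalerBl scale1r scalerBr [LHS]addrAC [RHS]addrA.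
have -> : `|S wt - zeta| ^+ 2 = ip p p + 2 * t * ip p q + t ^+ 2 * ip q q.
  rewrite -(ip_normE ip_inner) Swt addrAC -/p (ip_sqrD ip_inner).
  by rewrite !(ipZr ip_inner) (ipZl ip_inner); ring.
have -> : `|S uk - zeta| ^+ 2 = ip p p by rewrite (ip_normE ip_inner).
have -> : ip (S (wt - u n)) m = ip (S (uk - u n)) m + t * ip q m.
  by rewrite !linearB Swt addrAC (ipDl ip_inner) (ipZl ip_inner).
have := L2norm_sqr_convex_comb uk w ht; rewrite -/Qd -/Qk -/Qw -/wt.
move=> hQ; have -> : L2norm mu wt ^+ 2 = (1 - t) * Qk + t * Qw - t * (1 - t) * Qd.
  by lra.
nra.
Qed.

Lemma bregman_variational_ineq n (w : L2 mu) : Uad mu ua ub w ->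
  L2norm mu (u n.+1) ^+ 2 / 2
  + ip (S w - S (u n.+1)) (bregman_mu mu S alpha zeta u n.+1)
  + L2norm mu (w - u n.+1) ^+ 2 / 2 <= L2norm mu w ^+ 2 / 2.
Proof.
move=> hw; have := bregman_step_first_order n hw.
set uk := u n.+1; set a := alpha n.+1; set q := S w - S uk.
have a0 : 0 < a by exact: alpha_pos.
have -> : ip (S uk - zeta) q = - (a * (a^-1 * ip q (zeta - S uk))).
  by rewrite mulrA divff ?lt0r_neq0 // mul1r -opprB (ipNl ip_inner) (ip_sym ip_inner).
rewrite -mulrN -mulrDr pmulr_rge0 // => h.
rewrite bregman_muS (ipDr ip_inner) (ipZr ip_inner); lra.
Qed.

End bregman_step.

Section stability.
Context {d} {T : measurableType d} {R : realType} {mu : {measure set T -> \bar R}}.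
Context {Y : normedModType R} {ip : Y -> Y -> R} {S : {linear L2 mu -> Y}}
  {Sadj : Y -> L2 mu} {ua ub : T -> R} {alpha : nat -> R} {z zd : Y}
  {u ud : nat -> L2 mu}.
Hypotheses (ip_inner : is_inner_product ip)
  (Sadj_adj : forall u y, ip (S u) y = L2ip mu u (Sadj y))
  (alpha_pos : forall k, (1 <= k)%N -> 0 < alpha k)
  (Uad_ne : exists v : L2 mu, Uad mu ua ub v)
  (hu : bregman_iteration mu ua ub S Sadj alpha z u)
  (hud : bregman_iteration mu ua ub S Sadj alpha zd ud).

Lemma bregman_iterates_dist_le n :
  L2norm mu (ud n.+1 - u n.+1) ^+ 2
  <= ip (S (ud n.+1) - S (u n.+1))
        (bregman_mu mu S alpha zd ud n.+1 - bregman_mu mu S alpha z u n.+1).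
Proof.
have := bregman_variational_ineq ip_inner Sadj_adj alpha_pos Uad_ne hu n
  (bregman_iterate_Uad alpha_pos Uad_ne hud n.+1).
have := bregman_variational_ineq ip_inner Sadj_adj alpha_pos Uad_ne hud n
  (bregman_iterate_Uad alpha_pos Uad_ne hu n.+1).
rewrite (L2norm_distC (u n.+1)) -opprB (ipNl ip_inner) (ipBr ip_inner); lra.
Qed.

End stability.

Section telescoping.
Context {R : realType} {Y : normedModType R} {ip : Y -> Y -> R}.
Hypothesis ip_inner : is_inner_product ip.

Lemma weighted_energy_le (alpha : nat -> R) (v : nat -> Y) (e : Y)
    (q : nat -> R) (delta : R) :
  (forall k, (1 <= k)%N -> 0 < alpha k) -> ip e e <= delta ^+ 2 ->
  (forall n, q n.+1 <= ip (v n.+1)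
                (gamma_seq alpha n.+1 *: e - weighted_sum alpha v n.+1)) ->
  forall n, \sum_(1 <= i < n.+1) (alpha i)^-1 * q i
            + ip (weighted_sum alpha v n) (weighted_sum alpha v n) / 2
            <= delta ^+ 2 / 2 * \sum_(1 <= i < n.+1) gamma_seq alpha i ^+ 2.
Proof.
move=> alpha_pos he hq; elim=> [|n IH].
  by rewrite /weighted_sum !big_geq // (ip_normE ip_inner) normr0; lra.
rewrite !(big_nat_recr n.+1) //=.
set W := weighted_sum alpha v n; set g := gamma_seq alpha n.+1.
set w := (alpha n.+1)^-1 *: v n.+1.
have WS : weighted_sum alpha v n.+1 = W + w by rewrite /weighted_sum big_nat_recr.
have a0 : 0 < (alpha n.+1)^-1 by rewrite invr_gt0 alpha_pos.
have step : (alpha n.+1)^-1 * q n.+1 <= g * ip w e - ip w W - ip w w.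
  have := ler_wpM2l (ltW a0) (hq n).
  rewrite -(ipZl ip_inner) -/w -/g WS (ipBr ip_inner) (ipZr ip_inner).
  by rewrite (ipDr ip_inner); lra.
clearbody w; have young := ip_young ip_inner w (g *: e).
rewrite (ipZr ip_inner) (ipZl ip_inner) (ipZr ip_inner) in young.
have : g ^+ 2 * ip e e <= g ^+ 2 * delta ^+ 2 by rewrite ler_wpM2l ?sqr_ge0.
rewrite WS (ip_sqrD ip_inner) (ip_sym ip_inner W w); nra.
Qed.

End telescoping.

Theorem mainTheorem1 (d : measure_display) (T : measurableType d) (R : realType)
  (mu : {measure set T -> \bar R})
  (mu_fin : (mu [set: T] < +oo)%E)
  (Y : completeNormedModType R) (ip : Y -> Y -> R)
  (ip_inner : is_inner_product ip)
  (S : {linear L2 mu -> Y})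
  (S_bounded : exists C : R, forall u : L2 mu, `|S u| <= C * L2norm mu u)
  (Sadj : Y -> L2 mu)
  (Sadj_adj : forall (u : L2 mu) (y : Y), ip (S u) y = L2ip mu u (Sadj y))
  (ua ub : T -> R)
  (ua_meas : measurable_fun [set: T] ua) (ub_meas : measurable_fun [set: T] ub)
  (ua_inf : ('N[mu]_+oo[EFin \o ua] < +oo)%E)
  (ub_inf : ('N[mu]_+oo[EFin \o ub] < +oo)%E)
  (Uad_ne : exists u : L2 mu, Uad mu ua ub u)
  (alpha : nat -> R)
  (alpha_pos : forall k, (1 <= k)%N -> 0 < alpha k)
  (alpha_bnd : exists M : R, forall k, (1 <= k)%N -> alpha k <= M)
  (z zd : Y) (delta : R) (delta_ge0 : 0 <= delta)
  (hz : `|z - zd| <= delta)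
  (u ud : nat -> L2 mu)
  (hu : bregman_iteration mu ua ub S Sadj alpha z u)
  (hud : bregman_iteration mu ua ub S Sadj alpha zd ud) :
  forall k : nat, (1 <= k)%N ->
    \sum_(1 <= i < k.+1) (alpha i)^-1 * L2norm mu (ud i - u i : L2 mu) ^+ 2
    <= delta ^+ 2 * \sum_(1 <= i < k.+1)
                      ((alpha i)^-2 + gamma_seq alpha i.-1 ^+ 2).
Proof.
(* The finiteness and boundedness hypotheses only guarantee that the
   iterations exist; here they are given. *)
move=> k _.
have he : ip (zd - z) (zd - z) <= delta ^+ 2.
  by rewrite ip_normE // distrC lerXn2r // ?nnegrE.
pose v i := S (ud i) - S (u i).
have hq n : L2norm mu (ud n.+1 - u n.+1) ^+ 2
    <= ip (v n.+1) (gamma_seq alpha n.+1 *: (zd - z) - weighted_sum alpha v n.+1).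
  by rewrite /v -bregman_mu_diff (bregman_iterates_dist_le ip_inner Sadj_adj alpha_pos Uad_ne hu hud).
apply: le_trans (_ : _ <= delta ^+ 2 / 2 * \sum_(1 <= i < k.+1) gamma_seq alpha i ^+ 2) _.
  apply: le_trans (weighted_energy_le ip_inner
    (q := fun i => L2norm mu (ud i - u i) ^+ 2) alpha_pos he hq k).
  by rewrite lerDl divr_ge0 // (ip_normE ip_inner) sqr_ge0.
rewrite -mulrA ler_wpM2l ?sqr_ge0 // mulr_sumr.
apply: ler_sum_nat => -[|i] // _; rewrite gamma_seqS -exprVn /=.
have := sqr_ge0 (gamma_seq alpha i - (alpha i.+1)^-1); nra.
Qed.
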